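(* Let $D<0$ be a prime discriminant, $\mu\in L'/L$, $m\in\mathbb{Z}+Q(\mu)$ with $m>0$, and fix $X_0\in L^0_{m,\mu}$. Then $L^0_{m,\mu}=V(\mathbb{Q})\cap UX_0$.
   Context: A prime discriminant is $D\in\{-4,-8\}$ or $D=-\ell$, $\ell\equiv3\pmod4$ prime. $\mathcal{O}_D$ is the ring of integers of $\mathbb{Q}(\sqrt D)$, $\mathfrak{d}_D^{-1}=\frac1{\sqrt D}\mathcal{O}_D$. $L=\{\begin{pmatrix}a&b\\\bar b&c\end{pmatrix}:a,c\in\mathbb{Z},b\in\mathcal{O}_D\}$, $Q(X)=ac-|b|^2$, dual $L'$ with $b\in\mathfrak{d}_D^{-1}$, $V=L\otimes\mathbb{Q}$, $G=\mathrm{SO}(V)$. $X\in L'$ is primitive if $\frac1rX\notin L'$ for every integer $r>1$; $L^0_{m,\mu}$ is the set of primitive $X\in L+\mu$ with $Q(X)=m$. $U=\prod_pU_p$ with $U_p=\{g\in G(\mathbb{Q}_p):gL_p=L_p,\ g\text{ trivial on }L'_p/L_p\}$ ($L_p=L\otimes\mathbb{Z}_p$, $L'_p=L'\otimes\mathbb{Z}_p$); $U$ acts on $V(\mathbb{A}_f)=V\otimes\mathbb{A}_f$ and $V(\mathbb{Q})\subset V(\mathbb{A}_f)$ diagonally. *)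

From HB Require Import structures.
From mathcomp Require Import all_boot all_order all_algebra.
From mathcomp Require Import boolp.
Set Implicit Arguments.
Unset Strict Implicit.
Unset Printing Implicit Defensive.
Import Order.TTheory GRing.Theory Num.Theory.
Local Open Scope ring_scope.

(* The p-adic integers Z_p, built as the inverse limit lim_n Z/p^n Z:       *)
(* an element is a sequence (a_n)_n of integers with a_n = a_{n+1} mod p^n  *)
(* and 0 <= a_n < p^n (the reduced representative of the class mod p^n).   *)
(* As for MathComp's 'Z_p, the modulus used is maxn p 2 (= p for p prime),  *)
(* so that Zp p is always a nontrivial commutative ring.                    *)

Definition zpmod (p n : nat) : int := ((maxn p 2)%:Z ^+ n)%R.

Record Zp (p : nat) := MkZp {
  zseq : nat -> int ;
  zseqP : forall n, zseq n = modz (zseq n.+1) (zpmod p n) }.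

Arguments MkZp {p}.
Arguments zseq {p}.

HB.instance Definition _ p := gen_eqMixin (Zp p).
HB.instance Definition _ p := gen_choiceMixin (Zp p).

Section ZpRing.
Variable p : nat.
Local Notation Q n := (zpmod p n).

Lemma zp_eq (a b : Zp p) : zseq a = zseq b -> a = b.
Proof.
case: a b => [f fP] [g gP] /= efg; subst g.
by rewrite (Prop_irrelevance fP gP).
Qed.

Lemma zpmodS_mod (m : int) n : modz (modz m (Q n.+1)) (Q n) = modz m (Q n).
Proof.
rewrite {2}(divz_eq m (Q n.+1)) /zpmod exprS mulrA.
by rewrite -[in RHS]modzDml modzMl add0r.
Qed.

Lemma zred (a : Zp p) n : modz (zseq a n) (Q n) = zseq a n.
Proof. by rewrite [in RHS](zseqP a n) [in LHS](zseqP a n) modz_mod. Qed.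

Definition zp_lift1 (F : int -> int)
  (HF : forall x d, modz (F (modz x d)) d = modz (F x) d) (a : Zp p) : Zp p.
Proof.
refine (MkZp (fun n => modz (F (zseq a n)) (Q n)) _) => n.
by rewrite zpmodS_mod (zseqP a n) HF.
Defined.

Definition zp_lift2 (F : int -> int -> int)
  (HF : forall x y d, modz (F (modz x d) (modz y d)) d = modz (F x y) d)
  (a b : Zp p) : Zp p.
Proof.
refine (MkZp (fun n => modz (F (zseq a n) (zseq b n)) (Q n)) _) => n.
by rewrite zpmodS_mod (zseqP a n) (zseqP b n) HF.
Defined.

Definition zp_const (c : int) : Zp p.
Proof.
refine (MkZp (fun n => modz c (Q n)) _) => n.
by rewrite zpmodS_mod.
Defined.

Lemma zp_addP (x y d : int) : modz (modz x d + modz y d) d = modz (x + y) d.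
Proof. exact: modzDm. Qed.
Lemma zp_mulP (x y d : int) : modz (modz x d * modz y d) d = modz (x * y) d.
Proof. exact: modzMm. Qed.
Lemma zp_oppP (x d : int) : modz (- modz x d) d = modz (- x) d.
Proof. exact: modzNm. Qed.

Definition zp_zero := zp_const 0.
Definition zp_one := zp_const 1.
Definition zp_add := zp_lift2 zp_addP.
Definition zp_mul := zp_lift2 zp_mulP.
Definition zp_opp := zp_lift1 zp_oppP.

Lemma zp_addA : associative zp_add.
Proof. by move=> a b c; apply: zp_eq => /=; apply: funext => n /=; rewrite modzDml modzDmr addrA. Qed.
Lemma zp_addC : commutative zp_add.
Proof. by move=> a b; apply: zp_eq; apply: funext => n /=; rewrite addrC. Qed.
Lemma zp_add0 : left_id zp_zero zp_add.
Proof. by move=> a; apply: zp_eq; apply: funext => n /=; rewrite mod0z add0r zred. Qed.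
Lemma zp_addN : left_inverse zp_zero zp_opp zp_add.
Proof. by move=> a; apply: zp_eq; apply: funext => n /=; rewrite modzDml addNr. Qed.

HB.instance Definition _ := GRing.isZmodule.Build (Zp p) zp_addA zp_addC zp_add0 zp_addN.

Lemma zp_mulA : associative zp_mul.
Proof. by move=> a b c; apply: zp_eq; apply: funext => n /=; rewrite modzMml modzMmr mulrA. Qed.
Lemma zp_mulC : commutative zp_mul.
Proof. by move=> a b; apply: zp_eq; apply: funext => n /=; rewrite mulrC. Qed.
Lemma zp_mul1 : left_id zp_one zp_mul.
Proof. by move=> a; apply: zp_eq; apply: funext => n /=; rewrite modzMml mul1r zred. Qed.
Lemma zp_mulDl : left_distributive zp_mul zp_add.
Proof.
by move=> a b c; apply: zp_eq; apply: funext => n /=; rewrite modzMml modzDm mulrDl.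
Qed.
Lemma zp_one_neq0 : zp_one != 0.
Proof.
apply/eqP => /(f_equal (fun x : Zp p => zseq x 1%N)) /=.
rewrite mod0z modz_small // /zpmod expr1 ltz_nat.
by rewrite leq_max ltnSn orbT.
Qed.

HB.instance Definition _ := GRing.Zmodule_isComNzRing.Build (Zp p)
  zp_mulA zp_mulC zp_mul1 zp_mulDl zp_one_neq0.

End ZpRing.

(* The lattice L of Hermitian matrices [[a, b], [conj b, c]], a, c in Z,    *)
(* b in O_D.  We write O_D = Z + Z w with w = (t + sqrt D)/2, where         *)
(* t = 1 if D is odd (D = -l, l = 3 mod 4) and t = 0 if D in {-4,-8}; then  *)
(* |b1 + b2 w|^2 = b1^2 + t b1 b2 + n b2^2 with n = N(w) = (t - D)/4.        *)
(* V = L (x) Q is identified with column vectors (a, c, b1, b2) in Q^4      *)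
(* (coordinates w.r.t. the Z-basis of L), so that L = Z^4 and               *)
(* Q(X) = a c - |b|^2.  For a commutative ring R, the same formula defines  *)
(* the quadratic form on L (x) R = R^4 (used for R = Z_p).                   *)

Definition prime_disc (D : int) : Prop :=
  D = -4 \/ D = -8 \/
  exists l : nat, [/\ prime l, (l %% 4 = 3)%N & D = - (l%:Z)].

Definition disc_t (D : int) : int := (odd (absz D))%:Z.
Definition disc_n (D : int) : int := divz (disc_t D - D) 4.

Definition cA {R : Type} (x : 'cV[R]_4) : R := x (inord 0) 0.
Definition cC {R : Type} (x : 'cV[R]_4) : R := x (inord 1) 0.
Definition cB1 {R : Type} (x : 'cV[R]_4) : R := x (inord 2) 0.
Definition cB2 {R : Type} (x : 'cV[R]_4) : R := x (inord 3) 0.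

Definition normb {R : comNzRingType} (D : int) (b1 b2 : R) : R :=
  b1 ^+ 2 + (disc_t D)%:~R * b1 * b2 + (disc_n D)%:~R * b2 ^+ 2.

Definition Qf {R : comNzRingType} (D : int) (x : 'cV[R]_4) : R :=
  cA x * cC x - normb D (cB1 x) (cB2 x).

Definition bil {R : comNzRingType} (D : int) (x y : 'cV[R]_4) : R :=
  Qf D (x + y) - Qf D x - Qf D y.

Definition inL (x : 'cV[rat]_4) : Prop := forall i, x i 0 \is a Num.int.

Definition inL' (D : int) (x : 'cV[rat]_4) : Prop :=
  forall y, inL y -> bil D x y \is a Num.int.

Definition primitive (D : int) (x : 'cV[rat]_4) : Prop :=
  forall r : nat, (1 < r)%N -> ~ inL' D ((r%:R)^-1 *: x).

Definition L0 (D : int) (m : rat) (mu x : 'cV[rat]_4) : Prop :=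
  [/\ inL (x - mu), Qf D x = m & primitive D x].

(* Local data at a prime p.  An element g of G(Q_p) = SO(V)(Q_p) with       *)
(* g L_p = L_p is (in the Z-basis of L) a matrix g in M_4(Z_p) with          *)
(* det g = 1 preserving Q.  Vectors of V(Q) are compared in V(Q_p) after    *)
(* clearing denominators by a positive integer N (Z_p is torsion free).     *)

Definition toZp (p : nat) (v : 'cV[rat]_4) : 'cV[Zp p]_4 :=
  map_mx (fun r : rat => (numq r)%:~R) v.

Definition act_eq (p : nat) (g : 'M[Zp p]_4) (x y : 'cV[rat]_4) : Prop :=
  exists N : nat, [/\ (0 < N)%N, inL (N%:R *: x), inL (N%:R *: y) &
    g *m toZp p (N%:R *: x) = toZp p (N%:R *: y)].

(* g in U_p: g in SO(V)(Q_p), g L_p = L_p, g trivial on L'_p / L_p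
   (it suffices to test the last condition on the generators L' of L'_p:
    for X in L', g X - X in L_p). *)
Definition in_Up (D : int) (p : nat) (g : 'M[Zp p]_4) : Prop :=
  [/\ \det g = 1,
      forall x : 'cV[Zp p]_4, Qf D (g *m x) = Qf D x &
      forall x : 'cV[rat]_4, inL' D x ->
        exists N : nat, [/\ (0 < N)%N, inL (N%:R *: x) &
          exists z : 'cV[Zp p]_4,
            g *m toZp p (N%:R *: x) - toZp p (N%:R *: x) = N%:R *: z]].

Definition in_UX0 (D : int) (x0 x : 'cV[rat]_4) : Prop :=
  forall p : nat, prime p -> exists g : 'M[Zp p]_4, in_Up D g /\ act_eq g x0 x.

From Pilot Require Import Defs.
From HB Require Import structures.
From mathcomp Require Import all_boot all_order all_algebra.
From mathcomp Require Import ring boolp.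
Import Order.TTheory GRing.Theory Num.Theory.
Local Open Scope ring_scope.
Set Implicit Arguments. Unset Strict Implicit. Unset Printing Implicit Defensive.

(* Fix a prime p.  The group U_p contains the Eichler transformations attached to the
   isotropic vector e = (1, 0, 0, 0), the involution swapping a and c, and the scalings
   (a, c) |-> (l a, l^-1 c) by p-adic units.  If X lies in X0 + L with Q(X) = Q(X0) and
   X / p is not in L', these move X to a normal form with c = 1 and the b-part of X0: when
   c is prime to p one clears b by an Eichler transformation and rescales c, the
   a-coordinate being then forced by Q; when only a is, one first swaps a and c; when p
   divides both, some y in L has (X, y) prime to p, and the Eichler transformation by the
   b-part of y makes a prime to p.  Comparing
   X and X0 with the common normal form gives g in U_p with g X0 = X.
   Conversely, if g X0 = X with g in U_p for every p, then X - X0 = g X0 - X0 is p-adically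
   integral for all p, so lies in L; Q(X) = Q(X0); and (X0, y) = (X, g y) shows that X0 / q
   lies in L' as soon as X / q does. *)

(* [Zp] alone would denote MathComp's [zmodp] subgroup. *)
Local Notation Zpadic := Pilot.Defs.Zp.

Section Coordinates.
Variable R : comNzRingType.

Definition vec4 (a c b1 b2 : R) : 'cV[R]_4 := \col_(i < 4) nth 0 [:: a; c; b1; b2] i.
Definition mx4 (f : nat -> nat -> R) : 'M[R]_4 := \matrix_(i < 4, j < 4) f i j.

Lemma cA_vec4 a c b1 b2 : cA (vec4 a c b1 b2) = a.
Proof. by rewrite /cA mxE inordK. Qed.
Lemma cC_vec4 a c b1 b2 : cC (vec4 a c b1 b2) = c.
Proof. by rewrite /cC mxE inordK. Qed.
Lemma cB1_vec4 a c b1 b2 : cB1 (vec4 a c b1 b2) = b1.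
Proof. by rewrite /cB1 mxE inordK. Qed.
Lemma cB2_vec4 a c b1 b2 : cB2 (vec4 a c b1 b2) = b2.
Proof. by rewrite /cB2 mxE inordK. Qed.

Definition vec4E := (cA_vec4, cC_vec4, cB1_vec4, cB2_vec4).

Lemma vec4_coords (x : 'cV[R]_4) : x = vec4 (cA x) (cC x) (cB1 x) (cB2 x).
Proof.
apply/matrixP => i j; rewrite ord1 !mxE /cA /cC /cB1 /cB2.
by case: i => [[|[|[|[|k]]]] Hi] //=; congr (x _ _); apply: val_inj; rewrite /= inordK.
Qed.

Lemma cAZ (k : R) (x : 'cV[R]_4) : cA (k *: x) = k * cA x. Proof. by rewrite /cA mxE. Qed.
Lemma cCZ (k : R) (x : 'cV[R]_4) : cC (k *: x) = k * cC x. Proof. by rewrite /cC mxE. Qed.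
Lemma cB1Z (k : R) (x : 'cV[R]_4) : cB1 (k *: x) = k * cB1 x. Proof. by rewrite /cB1 mxE. Qed.
Lemma cB2Z (k : R) (x : 'cV[R]_4) : cB2 (k *: x) = k * cB2 x. Proof. by rewrite /cB2 mxE. Qed.

Lemma cB1D (x y : 'cV[R]_4) : cB1 (x + y) = cB1 x + cB1 y. Proof. by rewrite /cB1 mxE. Qed.
Lemma cB2D (x y : 'cV[R]_4) : cB2 (x + y) = cB2 x + cB2 y. Proof. by rewrite /cB2 mxE. Qed.

Lemma add_vec4 a c b1 b2 a' c' b1' b2' :
  vec4 a c b1 b2 + vec4 a' c' b1' b2' = vec4 (a + a') (c + c') (b1 + b1') (b2 + b2').
Proof.
apply/matrixP => i j; rewrite ord1 !mxE.
by case: i => [[|[|[|[|k]]]] Hi] //=; rewrite addr0.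
Qed.

Lemma scale_vec4 k a c b1 b2 : k *: vec4 a c b1 b2 = vec4 (k * a) (k * c) (k * b1) (k * b2).
Proof.
apply/matrixP => i j; rewrite ord1 !mxE.
by case: i => [[|[|[|[|l]]]] Hi] //=; rewrite mulr0.
Qed.

Lemma sub_vec4 a c b1 b2 a' c' b1' b2' :
  vec4 a c b1 b2 - vec4 a' c' b1' b2' = vec4 (a - a') (c - c') (b1 - b1') (b2 - b2').
Proof. by rewrite -scaleN1r scale_vec4 add_vec4 !mulN1r. Qed.

Lemma mul_mx4_vec4 f a c b1 b2 : mx4 f *m vec4 a c b1 b2 =
  vec4 (f 0%N 0%N * a + f 0%N 1%N * c + f 0%N 2%N * b1 + f 0%N 3%N * b2)
       (f 1%N 0%N * a + f 1%N 1%N * c + f 1%N 2%N * b1 + f 1%N 3%N * b2)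
       (f 2%N 0%N * a + f 2%N 1%N * c + f 2%N 2%N * b1 + f 2%N 3%N * b2)
       (f 3%N 0%N * a + f 3%N 1%N * c + f 3%N 2%N * b1 + f 3%N 3%N * b2).
Proof.
apply/matrixP => i j; rewrite ord1 !mxE !big_ord_recl big_ord0 !mxE /=.
by case: i => [[|[|[|[|k]]]] Hi] //=; rewrite ?addr0 ?addrA.
Qed.

Lemma det_mx4 f : \det (mx4 f) =
    f 0%N 0%N * (f 1%N 1%N * (f 2%N 2%N * f 3%N 3%N - f 2%N 3%N * f 3%N 2%N)
               - f 1%N 2%N * (f 2%N 1%N * f 3%N 3%N - f 2%N 3%N * f 3%N 1%N)
               + f 1%N 3%N * (f 2%N 1%N * f 3%N 2%N - f 2%N 2%N * f 3%N 1%N))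
  - f 0%N 1%N * (f 1%N 0%N * (f 2%N 2%N * f 3%N 3%N - f 2%N 3%N * f 3%N 2%N)
               - f 1%N 2%N * (f 2%N 0%N * f 3%N 3%N - f 2%N 3%N * f 3%N 0%N)
               + f 1%N 3%N * (f 2%N 0%N * f 3%N 2%N - f 2%N 2%N * f 3%N 0%N))
  + f 0%N 2%N * (f 1%N 0%N * (f 2%N 1%N * f 3%N 3%N - f 2%N 3%N * f 3%N 1%N)
               - f 1%N 1%N * (f 2%N 0%N * f 3%N 3%N - f 2%N 3%N * f 3%N 0%N)
               + f 1%N 3%N * (f 2%N 0%N * f 3%N 1%N - f 2%N 1%N * f 3%N 0%N))
  - f 0%N 3%N * (f 1%N 0%N * (f 2%N 1%N * f 3%N 2%N - f 2%N 2%N * f 3%N 1%N)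
               - f 1%N 1%N * (f 2%N 0%N * f 3%N 2%N - f 2%N 2%N * f 3%N 0%N)
               + f 1%N 2%N * (f 2%N 0%N * f 3%N 1%N - f 2%N 1%N * f 3%N 0%N)).
Proof.
do 3!rewrite !(expand_det_row _ 0) !big_ord_recl !big_ord0 /cofactor.
rewrite !det_mx11 !mxE /= /bump /= !(expr0, expr1, exprS) /=; ring.
Qed.

End Coordinates.

Section MapCoordinates.
Variables (R S : Type) (f : R -> S).

Lemma cA_map (x : 'cV[R]_4) : cA (map_mx f x) = f (cA x). Proof. by rewrite /cA mxE. Qed.
Lemma cC_map (x : 'cV[R]_4) : cC (map_mx f x) = f (cC x). Proof. by rewrite /cC mxE. Qed.
Lemma cB1_map (x : 'cV[R]_4) : cB1 (map_mx f x) = f (cB1 x). Proof. by rewrite /cB1 mxE. Qed.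
Lemma cB2_map (x : 'cV[R]_4) : cB2 (map_mx f x) = f (cB2 x). Proof. by rewrite /cB2 mxE. Qed.

End MapCoordinates.

Definition coords_map := (cA_map, cC_map, cB1_map, cB2_map).

Section QuadraticForm.
Variables (R : comNzRingType) (D : int).
Local Notation t := ((disc_t D)%:~R : R).
Local Notation n := ((disc_n D)%:~R : R).

(* [dualb1 x] and [dualb2 x] are, up to sign, the pairings of [x] with the
   two basis vectors of the [b]-part of [L]. *)
Definition dualb1 (x : 'cV[R]_4) : R := 2 * cB1 x + t * cB2 x.
Definition dualb2 (x : 'cV[R]_4) : R := t * cB1 x + 2 * n * cB2 x.

Lemma Qf_vec4 a c b1 b2 :
  Qf D (vec4 a c b1 b2) = a * c - (b1 ^+ 2 + t * b1 * b2 + n * b2 ^+ 2).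
Proof. by rewrite /Qf /normb !vec4E. Qed.

Lemma bilE (x y : 'cV[R]_4) :
  bil D x y = cA x * cC y + cA y * cC x - (cB1 y * dualb1 x + cB2 y * dualb2 x).
Proof.
rewrite /bil /dualb1 /dualb2 [x]vec4_coords [y]vec4_coords add_vec4 !Qf_vec4 !vec4E.
ring.
Qed.

Lemma bilC (x y : 'cV[R]_4) : bil D x y = bil D y x.
Proof. rewrite !bilE /dualb1 /dualb2; ring. Qed.

Lemma bilDr (x y z : 'cV[R]_4) : bil D x (y + z) = bil D x y + bil D x z.
Proof.
rewrite [y]vec4_coords [z]vec4_coords add_vec4 !bilE /dualb1 /dualb2 !vec4E; ring.
Qed.

Lemma bilZl k (x y : 'cV[R]_4) : bil D (k *: x) y = k * bil D x y.
Proof. rewrite !bilE /dualb1 /dualb2 !(cAZ, cCZ, cB1Z, cB2Z); ring. Qed.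

Lemma QfZ k (x : 'cV[R]_4) : Qf D (k *: x) = k ^+ 2 * Qf D x.
Proof. rewrite [x]vec4_coords scale_vec4 !Qf_vec4; ring. Qed.

Lemma dualb1Z k (x : 'cV[R]_4) : dualb1 (k *: x) = k * dualb1 x.
Proof. by rewrite /dualb1 cB1Z cB2Z; ring. Qed.

Lemma dualb2Z k (x : 'cV[R]_4) : dualb2 (k *: x) = k * dualb2 x.
Proof. by rewrite /dualb2 cB1Z cB2Z; ring. Qed.

Definition preserves_Qf (g : 'M[R]_4) := forall x, Qf D (g *m x) = Qf D x.

Lemma preserves_QfM g h : preserves_Qf g -> preserves_Qf h -> preserves_Qf (g *m h).
Proof. by move=> Hg Hh x; rewrite -mulmxA Hg Hh. Qed.

Lemma bil_preserves_Qf g x y : preserves_Qf g -> bil D (g *m x) (g *m y) = bil D x y.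
Proof. by move=> Hg; rewrite /bil -mulmxDr !Hg. Qed.

Lemma Qf_inj_lreg_cC (v w : 'cV[R]_4) : GRing.lreg (cC v) ->
  cC v = cC w -> cB1 v = cB1 w -> cB2 v = cB2 w -> Qf D v = Qf D w -> v = w.
Proof.
move=> reg_c ec e1 e2; rewrite /Qf -ec e1 e2 => /addIr.
rewrite ![_ * cC v]mulrC => /reg_c ea.
by rewrite [v]vec4_coords [w]vec4_coords ea ec e1 e2.
Qed.

End QuadraticForm.

Section MapQuadraticForm.
Variables (R S : comNzRingType) (D : int) (f : {rmorphism R -> S}).

Lemma dualb1_map x : dualb1 D (map_mx f x) = f (dualb1 D x).
Proof. by rewrite /dualb1 !coords_map !(rmorphD, rmorphM, rmorph_int, rmorph_nat). Qed.

Lemma dualb2_map x : dualb2 D (map_mx f x) = f (dualb2 D x).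
Proof. by rewrite /dualb2 !coords_map !(rmorphD, rmorphM, rmorph_int, rmorph_nat). Qed.

Lemma Qf_map x : Qf D (map_mx f x) = f (Qf D x).
Proof.
by rewrite /Qf /normb !coords_map !(rmorphB, rmorphD, rmorphM, rmorphXn, rmorph_int).
Qed.

Lemma bil_map x y : bil D (map_mx f x) (map_mx f y) = f (bil D x y).
Proof. by rewrite /bil -map_mxD !Qf_map !rmorphB. Qed.

End MapQuadraticForm.

Section Generators.
Variables (R : comNzRingType) (D : int).
Local Notation t := ((disc_t D)%:~R : R).
Local Notation n := ((disc_n D)%:~R : R).

(* The Eichler transformation X |-> X + (X, e) u - (X, u) e - Q(u) (X, e) e for the
   isotropic vector e = (1, 0, 0, 0) and u = (0, 0, u1, u2). *)
Definition eichler_mx (u1 u2 : R) : 'M[R]_4 := mx4 (fun i j => match i, j with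
  | 0%N, 0%N => 1 | 0%N, 1%N => normb D u1 u2
  | 0%N, 2%N => 2 * u1 + t * u2 | 0%N, 3%N => t * u1 + 2 * n * u2
  | 1%N, 1%N => 1 | 2%N, 1%N => u1 | 2%N, 2%N => 1 | 3%N, 1%N => u2 | 3%N, 3%N => 1
  | _, _ => 0 end).

(* Swaps [a] and [c] and maps [b] to [- conj b]. *)
Definition swap_mx : 'M[R]_4 := mx4 (fun i j => match i, j with
  | 0%N, 1%N => 1 | 1%N, 0%N => 1 | 2%N, 2%N => -1 | 2%N, 3%N => - t | 3%N, 3%N => 1
  | _, _ => 0 end).

Definition scale_ac_mx (l l' : R) : 'M[R]_4 := mx4 (fun i j => match i, j with
  | 0%N, 0%N => l | 1%N, 1%N => l' | 2%N, 2%N => 1 | 3%N, 3%N => 1 | _, _ => 0 end).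

Lemma eichler_mxE u1 u2 x : eichler_mx u1 u2 *m x = vec4
  (cA x + u1 * dualb1 D x + u2 * dualb2 D x + normb D u1 u2 * cC x)
  (cC x) (cB1 x + u1 * cC x) (cB2 x + u2 * cC x).
Proof.
rewrite {1}[x]vec4_coords mul_mx4_vec4 /dualb1 /dualb2 /normb.
by congr vec4; ring.
Qed.

Lemma swap_mxE x : swap_mx *m x = vec4 (cC x) (cA x) (cB1 x - dualb1 D x) (cB2 x).
Proof. by rewrite {1}[x]vec4_coords mul_mx4_vec4 /dualb1; congr vec4; ring. Qed.

Lemma scale_ac_mxE l l' x :
  scale_ac_mx l l' *m x = vec4 (l * cA x) (l' * cC x) (cB1 x) (cB2 x).
Proof. by rewrite {1}[x]vec4_coords mul_mx4_vec4; congr vec4; ring. Qed.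

Lemma eichler_mx_subE u1 u2 x : eichler_mx u1 u2 *m x - x = vec4
  (u1 * dualb1 D x + u2 * dualb2 D x + normb D u1 u2 * cC x) 0 (u1 * cC x) (u2 * cC x).
Proof. by rewrite eichler_mxE [X in _ - X]vec4_coords sub_vec4; congr vec4; ring. Qed.

Lemma swap_mx_subE x :
  swap_mx *m x - x = vec4 (cC x - cA x) (cA x - cC x) (- dualb1 D x) 0.
Proof. by rewrite swap_mxE [X in _ - X]vec4_coords sub_vec4; congr vec4; ring. Qed.

Lemma scale_ac_mx_subE l l' x :
  scale_ac_mx l l' *m x - x = vec4 ((l - 1) * cA x) ((l' - 1) * cC x) 0 0.
Proof. by rewrite scale_ac_mxE [X in _ - X]vec4_coords sub_vec4; congr vec4; ring. Qed.

Lemma cA_eichler_bil x y :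
  cA (eichler_mx (cB1 y) (cB2 y) *m x) + bil D x y =
  cA x * (1 + cC y) + cC x * (normb D (cB1 y) (cB2 y) + cA y).
Proof. by rewrite eichler_mxE bilE cA_vec4; ring. Qed.

Lemma det_eichler_mx u1 u2 : \det (eichler_mx u1 u2) = 1.
Proof. rewrite /eichler_mx det_mx4 /=; ring. Qed.

Lemma det_swap_mx : \det swap_mx = 1.
Proof. rewrite /swap_mx det_mx4 /=; ring. Qed.

Lemma det_scale_ac_mx l l' : l * l' = 1 -> \det (scale_ac_mx l l') = 1.
Proof. by move=> ll'; rewrite /scale_ac_mx det_mx4 /= -[RHS]ll'; ring. Qed.

Lemma eichler_preserves_Qf u1 u2 : preserves_Qf D (eichler_mx u1 u2).
Proof.
move=> x; rewrite eichler_mxE [in RHS](vec4_coords x) !Qf_vec4 /dualb1 /dualb2 /normb.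
ring.
Qed.

Lemma swap_preserves_Qf : preserves_Qf D swap_mx.
Proof. by move=> x; rewrite swap_mxE [in RHS](vec4_coords x) !Qf_vec4 /dualb1; ring. Qed.

Lemma scale_ac_preserves_Qf l l' : l * l' = 1 -> preserves_Qf D (scale_ac_mx l l').
Proof.
move=> ll' x; rewrite scale_ac_mxE [in RHS](vec4_coords x) !Qf_vec4.
by rewrite mulrACA ll' mul1r.
Qed.

End Generators.

Section MapGenerators.
Variables (R S : comNzRingType) (D : int) (f : {rmorphism R -> S}).

Lemma map_eichler_mx u1 u2 :
  map_mx f (eichler_mx D u1 u2) = eichler_mx D (f u1) (f u2).
Proof.
apply/matrixP => i j; rewrite !mxE /normb.
case: i j => [[|[|[|[|?]]]] ?] [[|[|[|[|?]]]] ?] //=;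
  by rewrite ?(rmorph0, rmorph1, rmorphD, rmorphM, rmorphXn, rmorph_int, rmorph_nat).
Qed.

Lemma map_swap_mx : map_mx f (swap_mx R D) = swap_mx S D.
Proof.
apply/matrixP => i j; rewrite !mxE.
case: i j => [[|[|[|[|?]]]] ?] [[|[|[|[|?]]]] ?] //=;
  by rewrite ?(rmorph0, rmorph1, rmorphN, rmorph_int).
Qed.

End MapGenerators.

Section DiscriminantKernel.
Variables (R : comNzRingType) (D : int).

(* [v] lies in [N L'] (over [R]): its pairings with the basis of [L] are all
   divisible by [N]. *)
Definition dual_mod (N : R) (v : 'cV[R]_4) := exists a c k1 k2 : R,
  [/\ cA v = N * a, cC v = N * c, dualb1 D v = N * k1 & dualb2 D v = N * k2].

Definition discr_kernel (g : 'M[R]_4) := [/\ \det g = 1, preserves_Qf D g &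
  forall N v, dual_mod N v -> exists z, g *m v - v = N *: z].

Lemma bil_dual_mod N v w : dual_mod N v -> exists s, bil D v w = N * s.
Proof.
case=> a [c [k1 [k2 [ha hc hk1 hk2]]]].
exists (a * cC w + cA w * c - (cB1 w * k1 + cB2 w * k2)).
by rewrite bilE ha hc hk1 hk2; ring.
Qed.

Lemma discr_kernelM g h : discr_kernel g -> discr_kernel h -> discr_kernel (g *m h).
Proof.
case=> dg Qg Kg [dh Qh Kh]; split; first by rewrite det_mulmx dg dh mulr1.
  exact: preserves_QfM.
move=> N v Nv; have [z1 gv] := Kg N v Nv; have [z2 hv] := Kh N v Nv.
exists (g *m z2 + z1).
by rewrite scalerDr scalemxAr -hv mulmxBr -gv mulmxA addrA subrK.
Qed.

Lemma discr_kernel_adj g : discr_kernel g -> discr_kernel (\adj g) /\ \adj g *m g = 1%:M.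
Proof.
case=> dg Qg Kg.
have adjK : \adj g *m g = 1%:M by rewrite mul_adj_mx dg.
have Kadj : g *m \adj g = 1%:M by rewrite mul_mx_adj dg.
split=> //; split.
- by have := det_mulmx g (\adj g); rewrite Kadj det1 dg mul1r.
- by move=> x; rewrite -(Qg (\adj g *m x)) mulmxA Kadj mul1mx.
move=> N v Nv; have [z gv] := Kg N v Nv.
exists (- (\adj g *m z)).
by rewrite scalerN scalemxAr -gv mulmxBr mulmxA adjK mul1mx opprB.
Qed.

Lemma discr_kernel_eichler u1 u2 : discr_kernel (eichler_mx D u1 u2).
Proof.
split; [exact: det_eichler_mx | exact: eichler_preserves_Qf |].
move=> N v [a [c [k1 [k2 [_ hc hk1 hk2]]]]].
exists (vec4 (u1 * k1 + u2 * k2 + normb D u1 u2 * c) 0 (u1 * c) (u2 * c)).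
rewrite eichler_mx_subE scale_vec4 hc hk1 hk2.
by congr vec4; ring.
Qed.

Lemma discr_kernel_swap : discr_kernel (swap_mx R D).
Proof.
split; [exact: det_swap_mx | exact: swap_preserves_Qf |].
move=> N v [a [c [k1 [k2 [ha hc hk1 _]]]]].
exists (vec4 (c - a) (a - c) (- k1) 0).
rewrite swap_mx_subE scale_vec4 ha hc hk1.
by congr vec4; ring.
Qed.

Lemma discr_kernel_scale_ac l l' : l * l' = 1 -> discr_kernel (scale_ac_mx l l').
Proof.
move=> ll'; split; [exact: det_scale_ac_mx | exact: scale_ac_preserves_Qf |].
move=> N v [a [c [k1 [k2 [ha hc _ _]]]]].
exists (vec4 ((l - 1) * a) ((l' - 1) * c) 0 0).
rewrite scale_ac_mx_subE scale_vec4 ha hc.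
by congr vec4; ring.
Qed.

End DiscriminantKernel.

Lemma intr_Zp p (k : int) : (k%:~R : Zpadic p) = zp_const p k.
Proof.
have natr_Zp (m : nat) : (m%:R : Zpadic p) = zp_const p m.
  elim: m => [|m IHm]; first by apply: zp_eq; apply: funext.
  rewrite -addn1 natrD IHm; apply: zp_eq; apply: funext => n /=.
  by rewrite modzDm PoszD.
case: k => m; first exact: natr_Zp.
rewrite NegzE mulrNz -[(Posz _)%:~R]/(m.+1%:R) natr_Zp.
by apply: zp_eq; apply: funext => n /=; rewrite modzNm.
Qed.

Section PadicIntegers.
Variables (p : nat) (p_pr : prime p).

Lemma zpmodE n : zpmod p n = p%:Z ^+ n.
Proof. by rewrite /zpmod; have := prime_gt1 p_pr; case: p => [|[|q]]. Qed.

Lemma zseq_intr (k : int) n : zseq (k%:~R : Zpadic p) n = (k %% p%:Z ^+ n)%Z.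
Proof. by rewrite intr_Zp -zpmodE. Qed.

Lemma Zp_dvdz (w M : int) (z : Zpadic p) :
  (w%:~R : Zpadic p) = M%:~R * z -> (p%:Z %| M)%Z -> (p%:Z %| w)%Z.
Proof.
move=> /(congr1 (zseq^~ 1%N)) /=; rewrite !zseq_intr zpmodE expr1.
by move=> wMz /dvdz_mod0P pM; apply/dvdz_mod0P; rewrite wMz pM mul0r mod0z.
Qed.

Lemma coprimez_pexp (c : int) n : ~~ (p%:Z %| c)%Z -> coprimez (p%:Z ^+ n) c.
Proof.
move=> p_c; apply: coprimezXl; rewrite /coprimez /gcdz /=.
by have : coprime p `|c|%N by rewrite prime_coprime.
Qed.

(* The inverses of [c] modulo the powers of [p] form a coherent sequence. *)
Lemma Zp_unit_intr (c : int) : ~~ (p%:Z %| c)%Z -> exists ci : Zpadic p, c%:~R * ci = 1.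
Proof.
move=> p_c; pose u n := projT1 (Bezoutz c (p%:Z ^+ n)).
have cu n : (c * u n = 1 %[mod p%:Z ^+ n])%Z.
  rewrite /u; case: (Bezoutz c _) => a [b /= ab].
  have /eqP cop : coprimez c (p%:Z ^+ n) by rewrite coprimez_sym coprimez_pexp.
  by rewrite cop in ab; rewrite -ab addrC modzMDl mulrC.
have modS (x : int) n : modz (modz x (p%:Z ^+ n.+1)) (p%:Z ^+ n) = modz x (p%:Z ^+ n).
  by have := zpmodS_mod p x n; rewrite !zpmodE.
have u_compat n : (u n = u n.+1 %[mod p%:Z ^+ n])%Z.
  apply/eqP; rewrite eqz_mod_dvd -(Gauss_dvdzr _ (coprimez_pexp n p_c)) mulrBr.
  by rewrite -eqz_mod_dvd; apply/eqP; rewrite (cu n) -(modS (c * u n.+1)) (cu n.+1) modS.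
have useq n : modz (u n) (zpmod p n) = modz (modz (u n.+1) (zpmod p n.+1)) (zpmod p n).
  by rewrite zpmodS_mod !zpmodE u_compat.
exists (MkZp _ useq); apply: zp_eq; apply: funext => n /=.
by rewrite intr_Zp /= modzMm zpmodE cu.
Qed.

Lemma Zp_unit_lreg (c ci : Zpadic p) : c * ci = 1 -> GRing.lreg c.
Proof.
by move=> cci; apply: mulrI0_lreg => y cy0; rewrite -[y]mul1r -cci mulrAC cy0 mul0r.
Qed.

Lemma Zp_p_lreg : GRing.lreg (p%:R : Zpadic p).
Proof.
apply: mulrI0_lreg => y /(congr1 (zseq^~ _)) py0; apply: zp_eq; apply: funext => n.
move: (py0 n.+1) => /=; rewrite -[p%:R]/((p%:Z)%:~R) zseq_intr !zpmodE modzMml mod0z.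
move=> /dvdz_mod0P; rewrite exprS dvdz_mul2l ?eqz_nat -?lt0n ?prime_gt0 //.
by move/dvdz_mod0P => yn; rewrite (zseqP y n) zpmodE yn mod0z.
Qed.

Lemma Zp_natr_lreg (m : nat) : (0 < m)%N -> GRing.lreg (m%:R : Zpadic p).
Proof.
elim/ltn_ind: m => m IHm m_gt0; have [m_le1 | m_gt1] := leqP m 1.
  have -> : m = 1%N by apply/eqP; rewrite eqn_leq m_le1.
  exact: lreg1.
have q_pr := pdiv_prime m_gt1; have q_gt0 := prime_gt0 q_pr.
rewrite -(divnK (pdiv_dvd m)) natrM; apply: lregM.
  apply: IHm; first by rewrite ltn_Pdiv ?prime_gt1.
  by rewrite divn_gt0 // dvdn_leq // pdiv_dvd.
have [-> | q_neq_p] := eqVneq (pdiv m) p; first exact: Zp_p_lreg.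
have p_q : ~~ (p%:Z %| (pdiv m)%:Z)%Z by rewrite dvdzE /= dvdn_prime2 // eq_sym.
by have [qi qqi] := Zp_unit_intr p_q; apply: Zp_unit_lreg qqi.
Qed.

Lemma intr_Zp_inj : injective (intr : int -> Zpadic p).
Proof.
move=> a b ab; apply/eqP; rewrite -subr_eq0; apply/negPn/negP => ab_neq0.
have ab_gt0 : (0 < `|a - b|)%N by rewrite absz_gt0.
have abs0 : (`|a - b|%N%:R : Zpadic p) = 0.
  have : ((a - b)%:~R : Zpadic p) = 0 by rewrite intrB ab subrr.
  case: (a - b) => m ab0; first exact: ab0.
  by move: ab0; rewrite NegzE intrN => /eqP; rewrite oppr_eq0 => /eqP.
by have := lreg_neq0 (Zp_natr_lreg ab_gt0); rewrite abs0 eqxx.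
Qed.

End PadicIntegers.

Ltac num_int := repeat first [ assumption | rewrite rpredN | apply: rpredB | apply: rpredD
  | apply: rpredM | apply: rpredX | apply: rpred_int | apply: rpred_nat | apply: rpred0
  | apply: rpred1 ].

Lemma dvdz_rat (q : nat) (a : int) : (0 < q)%N ->
  (q%:Z %| a)%Z = ((q%:R^-1 * a%:~R : rat) \is a Num.int).
Proof.
move=> q_gt0; have q0 : (q%:R : rat) != 0 by rewrite pnatr_eq0 -lt0n.
apply/idP/idP => [/dvdzP[b ->] | /intrP[b qab]].
  by rewrite intrM mulrCA -[(q%:Z)%:~R]/(q%:R) mulVf ?mulr1 ?rpred_int.
apply/dvdzP; exists b; apply: (@intr_inj rat).
by rewrite intrM -qab -[(q%:Z)%:~R]/(q%:R) mulrAC mulVf ?mul1r.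
Qed.

Section Lattice.
Variable D : int.

Lemma inL_vec4 a c b1 b2 : inL (vec4 a c b1 b2) <->
  [/\ a \is a Num.int, c \is a Num.int, b1 \is a Num.int & b2 \is a Num.int].
Proof.
split=> [Lv | [Za Zc Zb1 Zb2] i]; last by rewrite mxE; case: i => [[|[|[|[|k]]]] Hi].
have := Lv (inord 0); have := Lv (inord 1); have := Lv (inord 2); have := Lv (inord 3).
by rewrite !mxE !inordK.
Qed.

Lemma inLD x y : inL x -> inL y -> inL (x + y).
Proof. by move=> Lx Ly i; rewrite mxE rpredD. Qed.

Lemma inLZ (k : int) x : inL x -> inL (k%:~R *: x).
Proof. by move=> Lx i; rewrite mxE rpredM ?rpred_int. Qed.

Lemma inLN x : inL x -> inL (- x).
Proof. by rewrite -scaleN1r -[-1]/((-1)%:~R); apply: inLZ. Qed.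

Lemma inL0 : inL 0.
Proof. by move=> i; rewrite mxE rpred0. Qed.

Lemma inL_subr_trans x y z : inL (x - y) -> inL (y - z) -> inL (x - z).
Proof. by move=> Lxy Lyz; rewrite -(subrK y x) -addrA; apply: inLD. Qed.

Lemma inL_intmx v : inL v -> map_mx intr (map_mx numq v) = v.
Proof. by move=> Lv; apply/matrixP => i j; rewrite !mxE ord1 numqK. Qed.

Lemma inL_bil u v : inL u -> inL v -> bil D u v \is a Num.int.
Proof. by move=> /inL_intmx <- /inL_intmx <-; rewrite bil_map rpred_int. Qed.

Lemma inL'_coords x : inL' D x ->
  [/\ cA x \is a Num.int, cC x \is a Num.int, dualb1 D x \is a Num.int & dualb2 D x \is a Num.int].
Proof.
move=> L'x; have L'e a c b1 b2 : a \is a Num.int -> c \is a Num.int ->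
    b1 \is a Num.int -> b2 \is a Num.int ->
    cA x * c + a * cC x - (b1 * dualb1 D x + b2 * dualb2 D x) \is a Num.int.
  by move=> Za Zc Zb1 Zb2; have := L'x (vec4 a c b1 b2); rewrite bilE !vec4E; apply; apply/inL_vec4.
have simpl := (mul0r, mulr0, mul1r, mulr1, add0r, addr0, subr0, sub0r, rpredN).
split; [have := L'e 0 1 0 0 | have := L'e 1 0 0 0 | have := L'e 0 0 1 0 | have := L'e 0 0 0 1];
  by rewrite !simpl; apply; rewrite ?rpred0 ?rpred1.
Qed.

Lemma inL'D x y : inL' D x -> inL' D y -> inL' D (x + y).
Proof.
move=> L'x L'y z Lz; rewrite bilC bilDr !(bilC D z).
by apply: rpredD; [apply: L'x | apply: L'y].
Qed.

Lemma inL_inL' x : inL x -> inL' D x.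
Proof. by move=> Lx y; apply: inL_bil. Qed.

Lemma inL'_translate x y : inL' D x -> inL (y - x) -> inL' D y.
Proof. by move=> L'x Lyx; rewrite -(subrK x y); apply: inL'D => //; apply: inL_inL'. Qed.

Lemma exists_inL_scale x : exists N : nat, (0 < N)%N /\ inL (N%:R *: x).
Proof.
pose P : int := \prod_(i < 4) denq (x i 0).
have P_gt0 : 0 < P by apply: prodr_gt0 => i _; apply: denq_gt0.
exists `|P|%N; split=> [|i]; first by rewrite absz_gt0 gt_eqF.
rewrite mxE -[_%:R]/((Posz `|P|)%:~R) gez0_abs ?ltW // /P (bigD1 i) //= intrM.
by rewrite mulrAC [_ * x i 0]mulrC -numqE rpredM ?rpred_int.
Qed.

Lemma primitiveP x : primitive D x <-> forall q, prime q -> ~ inL' D (q%:R^-1 *: x).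
Proof.
split=> [Px q q_pr | Pq r r_gt1 L'rx]; first exact/Px/prime_gt1.
have q_pr := pdiv_prime r_gt1; set q := pdiv r in q_pr *; apply: (Pq _ q_pr) => y Ly.
have r0 : (r%:R : rat) != 0 by rewrite pnatr_eq0 -lt0n ltnW.
have -> : q%:R^-1 *: x = (r %/ q)%:R *: (r%:R^-1 *: x).
  rewrite scalerA; congr (_ *: _); rewrite -{2}(divnK (pdiv_dvd r)) natrM invfM mulrA.
  by rewrite mulfV ?mul1r // pnatr_eq0 -lt0n divn_gt0 ?prime_gt0 // dvdn_leq ?pdiv_dvd // ltnW.
by rewrite bilZl; apply: rpredM; [apply: rpred_nat | apply: L'rx].
Qed.

Lemma inL_Qf v : inL v -> Qf D v \is a Num.int.
Proof. by move=> /inL_intmx <-; rewrite Qf_map rpred_int. Qed.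

Lemma eichler_fixes_dual (u1 u2 : int) x : inL' D x ->
  inL (eichler_mx D u1%:~R u2%:~R *m x - x).
Proof.
move=> /inL'_coords[Za Zc Zd1 Zd2].
by rewrite eichler_mx_subE; apply/inL_vec4; rewrite /normb; split; num_int.
Qed.

Lemma swap_fixes_dual x : inL' D x -> inL (swap_mx rat D *m x - x).
Proof.
move=> /inL'_coords[Za Zc Zd1 Zd2].
by rewrite swap_mx_subE; apply/inL_vec4; split; num_int.
Qed.

End Lattice.

Section ToZp.
Variables (D : int) (p : nat).

Lemma toZp_intmx (w : 'cV[int]_4) : toZp p (map_mx intr w) = map_mx intr w.
Proof. by apply/matrixP => i j; rewrite !mxE numq_int. Qed.

Lemma toZpD u v : inL u -> inL v -> toZp p (u + v) = toZp p u + toZp p v.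
Proof. by move=> /inL_intmx <- /inL_intmx <-; rewrite -map_mxD !toZp_intmx map_mxD. Qed.

Lemma toZpZ (k : nat) v : inL v -> toZp p (k%:R *: v) = k%:R *: toZp p v.
Proof.
move=> /inL_intmx <-; rewrite -(rmorph_nat intr) -map_mxZ !toZp_intmx map_mxZ.
by rewrite rmorph_nat.
Qed.

Lemma toZp_mulmx (g : 'M[int]_4) v : inL v ->
  toZp p (map_mx intr g *m v) = map_mx intr g *m toZp p v.
Proof. by move=> /inL_intmx <-; rewrite -!map_mxM !toZp_intmx map_mxM. Qed.

Lemma Qf_toZp v : inL v -> Qf D (toZp p v) = (numq (Qf D v))%:~R.
Proof. by move=> /inL_intmx <-; rewrite toZp_intmx !Qf_map numq_int. Qed.

Lemma bil_toZp u v : inL u -> inL v -> bil D (toZp p u) (toZp p v) = (numq (bil D u v))%:~R.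
Proof. by move=> /inL_intmx <- /inL_intmx <-; rewrite !toZp_intmx !bil_map numq_int. Qed.

Lemma toZp_dual_mod x (N : nat) : inL' D x -> inL (N%:R *: x) ->
  dual_mod D (N%:R) (toZp p (N%:R *: x)).
Proof.
move=> /inL'_coords[/intrP[a ha] /intrP[c hc] /intrP[k1 hk1] /intrP[k2 hk2]] /inL_intmx vE.
rewrite -vE toZp_intmx; set w := map_mx numq _ in vE *.
have transfer (phi k : int) : (phi%:~R : rat) = (N%:Z * k)%:~R ->
    (phi%:~R : Zpadic p) = N%:R * k%:~R.
  by move=> /intr_inj ->; rewrite intrM.
exists a%:~R, c%:~R, k1%:~R, k2%:~R; rewrite cA_map cC_map dualb1_map dualb2_map.
split; apply: transfer.
- by rewrite -cA_map vE cAZ ha intrM.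
- by rewrite -cC_map vE cCZ hc intrM.
- by rewrite -dualb1_map vE dualb1Z hk1 intrM.
- by rewrite -dualb2_map vE dualb2Z hk2 intrM.
Qed.

Lemma discr_kernel_in_Up (g : 'M[Zpadic p]_4) : discr_kernel D g -> in_Up D g.
Proof.
case=> dg Qg Kg; split=> // x L'x; have [N [N_gt0 LNx]] := exists_inL_scale x.
by exists N; split=> //; apply/Kg/toZp_dual_mod.
Qed.

End ToZp.

Section Reduction.
Variables (D : int) (p : nat) (p_pr : prime p) (X0 : 'cV[rat]_4) (N : nat).
Hypotheses (N_gt0 : (0 < N)%N) (LNX0 : inL (N%:R *: X0)) (L'X0 : inL' D X0).

Definition Y0 := vec4 (cA X0 * cC X0) 1 (cB1 X0) (cB2 X0).

Definition in_class X := inL (X - X0) /\ Qf D X = Qf D X0.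

Definition reaches_Y0 X := exists G : 'M[Zpadic p]_4,
  discr_kernel D G /\ G *m toZp p (N%:R *: X) = toZp p (N%:R *: Y0).

Lemma in_class_L' X : in_class X -> inL' D X.
Proof. by case=> LXX0 _; apply: inL'_translate L'X0 LXX0. Qed.

Lemma in_class_inL_scale X : in_class X -> inL (N%:R *: X).
Proof.
case=> LXX0 _; rewrite -(subrK X0 X) scalerDr.
by apply: inLD => //; apply: (inLZ N%:Z LXX0).
Qed.

Lemma in_class_mx (g : 'M[rat]_4) X : preserves_Qf D g ->
  (forall x, inL' D x -> inL (g *m x - x)) -> in_class X -> in_class (g *m X).
Proof.
move=> Qg Kg XX0; have [LXX0 QX] := XX0; split; last by rewrite Qg.
exact: inL_subr_trans (Kg _ (in_class_L' XX0)) LXX0.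
Qed.

Lemma Qf_Y0 : Qf D Y0 = Qf D X0.
Proof. by rewrite /Y0 /Qf /normb !vec4E mulr1. Qed.

Lemma inL_scale_Y0 : inL (N%:R *: Y0).
Proof.
have [ZA ZC _ _] := inL'_coords L'X0.
move: LNX0; rewrite {1}[X0]vec4_coords /Y0 !scale_vec4 => /inL_vec4[_ _ Zb1 Zb2].
by apply/inL_vec4; split; num_int.
Qed.

Lemma cC_toZp_Y0 : cC (toZp p (N%:R *: Y0)) = N%:R.
Proof. by rewrite /toZp cC_map cCZ cC_vec4 mulr1 -[N%:R]/((N%:Z)%:~R) numq_int. Qed.

Lemma cB1_toZp_Y0 : cB1 (toZp p (N%:R *: Y0)) = cB1 (toZp p (N%:R *: X0)).
Proof. by rewrite /toZp !cB1_map !cB1Z cB1_vec4. Qed.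

Lemma cB2_toZp_Y0 : cB2 (toZp p (N%:R *: Y0)) = cB2 (toZp p (N%:R *: X0)).
Proof. by rewrite /toZp !cB2_map !cB2Z cB2_vec4. Qed.

Lemma in_class_Qf_toZp X : in_class X ->
  Qf D (toZp p (N%:R *: X)) = Qf D (toZp p (N%:R *: Y0)).
Proof.
move=> XX0; rewrite (@Qf_toZp D p _ (in_class_inL_scale XX0)) (@Qf_toZp D p _ inL_scale_Y0).
by rewrite !QfZ Qf_Y0 XX0.2.
Qed.

Lemma reaches_Y0_mx (g : 'M[int]_4) X :
  discr_kernel D (map_mx intr g : 'M[Zpadic p]_4) -> in_class X ->
  reaches_Y0 (map_mx intr g *m X) -> reaches_Y0 X.
Proof.
move=> Kg XX0 [G [KG GgX]]; exists (G *m map_mx intr g); split; first exact: discr_kernelM.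
rewrite -mulmxA -toZp_mulmx; first by rewrite -scalemxAr.
exact: in_class_inL_scale.
Qed.

Lemma reaches_Y0_unit_c X : in_class X -> ~~ (p%:R^-1 * cC X \is a Num.int) -> reaches_Y0 X.
Proof.
move=> XX0; have [_ /intrP[C XC] _ _] := inL'_coords (in_class_L' XX0).
rewrite XC -dvdz_rat ?prime_gt0 // => p_C.
have [ci Cci] := Zp_unit_intr p_pr p_C.
set v := toZp p (N%:R *: X); set d := toZp p (X0 - X).
have LX0X : inL (X0 - X) by rewrite -opprB; apply/inLN; case: XX0.
have LNX := in_class_inL_scale XX0; have LNd := inLZ N%:Z LX0X.
have vd : v + N%:R *: d = toZp p (N%:R *: X0).
  by rewrite -toZpZ // -toZpD // -scalerDr addrC subrK.
have vC : cC v = N%:R * C%:~R.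
  by rewrite /v /toZp cC_map cCZ XC -[N%:R]/((N%:Z)%:~R) -intrM numq_int intrM.
pose g := scale_ac_mx C%:~R ci *m eichler_mx D (ci * cB1 d) (ci * cB2 d).
have Kg : discr_kernel D g.
  by apply: discr_kernelM; [apply: discr_kernel_scale_ac | apply: discr_kernel_eichler].
have gvE : g *m v = vec4 (C%:~R * cA (eichler_mx D (ci * cB1 d) (ci * cB2 d) *m v)) N%:R
    (cB1 v + N%:R * cB1 d) (cB2 v + N%:R * cB2 d).
  rewrite -mulmxA scale_ac_mxE eichler_mxE !vec4E vC; congr vec4.
  - by rewrite mulrCA [ci * _]mulrC Cci mulr1.
  - by rewrite mulrAC mulrCA [ci * _]mulrC Cci mulr1.
  - by rewrite mulrAC mulrCA [ci * _]mulrC Cci mulr1.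
exists g; split=> //; symmetry; apply: (@Qf_inj_lreg_cC _ D).
- by rewrite cC_toZp_Y0; apply: Zp_natr_lreg.
- by rewrite gvE cC_vec4 cC_toZp_Y0.
- by rewrite gvE cB1_vec4 cB1_toZp_Y0 -vd cB1D cB1Z.
- by rewrite gvE cB2_vec4 cB2_toZp_Y0 -vd cB2D cB2Z.
- by case: Kg => _ Qg _; rewrite Qg in_class_Qf_toZp.
Qed.

Lemma reaches_Y0_unit_a X : in_class X -> ~~ (p%:R^-1 * cA X \is a Num.int) -> reaches_Y0 X.
Proof.
move=> XX0 p_A; apply: (@reaches_Y0_mx (swap_mx int D)) => //; rewrite map_swap_mx.
  exact: discr_kernel_swap.
apply: reaches_Y0_unit_c; last by rewrite swap_mxE cC_vec4.
exact: in_class_mx (@swap_preserves_Qf _ D) (@swap_fixes_dual D) XX0.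
Qed.

Lemma reaches_Y0_primitive X : in_class X -> ~ inL' D (p%:R^-1 *: X) -> reaches_Y0 X.
Proof.
move=> XX0 notL'.
have [pC|] := boolP (p%:R^-1 * cC X \is a Num.int); last exact: reaches_Y0_unit_c.
have [pA|] := boolP (p%:R^-1 * cA X \is a Num.int); last exact: reaches_Y0_unit_a.
have [y [Ly p_bil]] : exists y, inL y /\ ~ (p%:R^-1 * bil D X y \is a Num.int).
  by move/existsNP: notL' => [y /not_implyP[Ly]]; exists y; rewrite -bilZl.
have := Ly; rewrite [y]vec4_coords => /inL_vec4[Zya Zyc /intrP[u1 yu1] /intrP[u2 yu2]].
apply: (@reaches_Y0_mx (eichler_mx D u1 u2)) => //; rewrite map_eichler_mx.
  exact: discr_kernel_eichler.
apply: reaches_Y0_unit_a.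
  exact: in_class_mx (eichler_preserves_Qf _ _ _) (@eichler_fixes_dual D u1 u2) XX0.
have := cA_eichler_bil D X y; rewrite yu1 yu2 => eA.
apply/negP => p_A'; apply: p_bil.
have -> : bil D X y = cA X * (1 + cC y) + cC X * (normb D u1%:~R u2%:~R + cA y)
    - cA (eichler_mx D u1%:~R u2%:~R *m X) by rewrite -eA; ring.
by rewrite mulrBr mulrDr !mulrA /normb; num_int.
Qed.

End Reduction.

Definition Zp_integral (q : nat) (r : rat) := exists (M : nat) (w : int) (z : Zpadic q),
  [/\ (0 < M)%N, M%:R * r = w%:~R & (w%:~R : Zpadic q) = M%:R * z].

Lemma Zp_integral_denq q r : prime q -> Zp_integral q r -> ~~ (q %| `|denq r|)%N.
Proof.
move=> q_pr [M [w [z [M_gt0 Mr wMz]]]]; apply/negP => q_den.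
have wd : w * denq r = M%:Z * numq r.
  by apply: (@intr_inj rat); rewrite !intrM -Mr numqE -[(M%:Z)%:~R]/(M%:R) mulrA.
have : (M%:R : Zpadic q) * (z * (denq r)%:~R) = M%:R * (numq r)%:~R.
  by rewrite mulrA -wMz -intrM wd intrM.
move/(Zp_natr_lreg q_pr M_gt0); rewrite mulrC => /esym /(Zp_dvdz q_pr) q_num.
have /eqP g1 := coprime_num_den r.
have : (q %| gcdn `|numq r| `|denq r|)%N by rewrite dvdn_gcd q_den andbT; exact: q_num.
by rewrite g1 dvdn1 => /eqP q1; move: (prime_gt1 q_pr); rewrite q1.
Qed.

Lemma int_of_Zp_integral r : (forall q, prime q -> Zp_integral q r) -> r \is a Num.int.
Proof.
move=> Zr; rewrite Qint_def; apply/negPn/negP => den_neq1.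
have den_gt1 : (1 < `|denq r|)%N.
  rewrite ltn_neqAle absz_gt0 denq_neq0 andbT; move: den_neq1; apply: contra => /eqP d1.
  by rewrite -[denq r]gez0_abs ?ltW ?denq_gt0 // -d1.
have q_pr := pdiv_prime den_gt1.
by have := Zp_integral_denq q_pr (Zr _ q_pr); rewrite pdiv_dvd.
Qed.

Section Backward.
Variables (D : int) (X0 X : 'cV[rat]_4).
Hypotheses (L'X0 : inL' D X0) (UX : in_UX0 D X0 X).

Lemma in_UX0_congr q : prime q -> exists (M : nat) (z : 'cV[Zpadic q]_4),
  [/\ (0 < M)%N, inL (M%:R *: X), inL (M%:R *: X0) &
      toZp q (M%:R *: X) - toZp q (M%:R *: X0) = M%:R *: z].
Proof.
move=> q_pr; have [g [[_ _ Kg] [N [N_gt0 LNX0 LNX gX0]]]] := UX q_pr.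
have [N' [N'_gt0 LN'X0 [z gz]]] := Kg X0 L'X0.
have scaleM (u : 'cV[rat]_4) : (N * N')%N%:R *: u = N'%:R *: (N%:R *: u).
  by rewrite natrM scalerA mulrC.
set w0 := toZp q (N'%:R *: X0).
have MX0 : toZp q (N'%:R *: (N%:R *: X0)) = N%:R *: w0.
  by rewrite -scaleM natrM -scalerA (toZpZ _ _ LN'X0).
have gw0 : g *m w0 = w0 + N'%:R *: z by rewrite -gz addrC subrK.
have MX : toZp q (N'%:R *: (N%:R *: X)) = N%:R *: (g *m w0).
  by rewrite (toZpZ _ _ LNX) -gX0 scalemxAr -(toZpZ _ _ LNX0) MX0 -scalemxAr.
exists (N * N')%N, z; rewrite !scaleM; split.
- by rewrite muln_gt0 N_gt0.
- exact: (inLZ N'%:Z LNX).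
- exact: (inLZ N'%:Z LNX0).
- by rewrite MX MX0 gw0 scalerDr addrC addKr scalerA -natrM.
Qed.

Lemma in_UX0_inL : inL (X - X0).
Proof.
move=> i; apply: int_of_Zp_integral => q q_pr.
have [M [z [M_gt0 LMX LMX0 E]]] := in_UX0_congr q_pr.
exists M, (numq ((M%:R *: X) i 0) - numq ((M%:R *: X0) i 0)), (z i 0); split=> //.
  by rewrite intrB !numqK ?LMX ?LMX0 // !mxE mulrBr.
by have := congr1 (fun v : 'cV[Zpadic q]_4 => v i 0) E; rewrite !mxE intrB.
Qed.

Lemma in_UX0_Qf : Qf D X = Qf D X0.
Proof.
have [g [[_ Qg _] [N [N_gt0 LNX0 LNX gX0]]]] := @UX 2 isT.
have : Qf D (toZp 2 (N%:R *: X)) = Qf D (toZp 2 (N%:R *: X0)) by rewrite -gX0 Qg.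
rewrite !Qf_toZp // => /(@intr_Zp_inj 2 isT) /(congr1 (intr : int -> rat)).
rewrite !numqK ?inL_Qf // !QfZ => /mulfI; apply.
by rewrite expf_eq0 pnatr_eq0 -lt0n N_gt0.
Qed.

Lemma in_UX0_bil_dvd q y (k : int) : prime q -> inL' D (q%:R^-1 *: X) -> inL y ->
  bil D X0 y = k%:~R -> (q%:Z %| k)%Z.
Proof.
move=> q_pr L'qX Ly bilk; have [g [[_ Qg _] [N [N_gt0 LNX0 LNX gX0]]]] := UX q_pr.
have q0 : (q%:R : rat) != 0 by rewrite pnatr_eq0 -lt0n prime_gt0.
have NX : N%:R *: X = (q * N)%N%:R *: (q%:R^-1 *: X).
  by rewrite scalerA natrM mulrAC mulfV ?mul1r.
have LqNX : inL ((q * N)%N%:R *: (q%:R^-1 *: X)) by rewrite -NX.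
have [s Xs] := bil_dual_mod (g *m toZp q y) (toZp_dual_mod q L'qX LqNX).
have : (N%:R : Zpadic q) * k%:~R = N%:R * (q%:R * s).
  rewrite mulrA -natrM mulnC -Xs -NX -gX0 (bil_preserves_Qf _ _ Qg) bil_toZp //.
  have -> : bil D (N%:R *: X0) y = (N%:Z * k)%:~R by rewrite bilZl bilk intrM.
  by rewrite numq_int intrM.
move/(Zp_natr_lreg q_pr N_gt0) => ks.
by apply: (@Zp_dvdz _ q_pr k q%:Z s ks); rewrite dvdzz.
Qed.

Lemma in_UX0_primitive : primitive D X0 -> primitive D X.
Proof.
move=> P0; apply/primitiveP => q q_pr L'qX; apply: (P0 q (prime_gt1 q_pr)) => y Ly.
have [k bilk] : exists k : int, bil D X0 y = k%:~R by apply/intrP; apply: L'X0.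
rewrite bilZl bilk -dvdz_rat ?prime_gt0 //.
exact: in_UX0_bil_dvd q_pr L'qX Ly bilk.
Qed.

End Backward.

Lemma in_UX0_of_class D X0 X : inL' D X0 -> primitive D X0 -> primitive D X ->
  inL (X - X0) -> Qf D X = Qf D X0 -> in_UX0 D X0 X.
Proof.
move=> L'X0 P0 PX LXX0 QX q q_pr; have [N [N_gt0 LNX0]] := exists_inL_scale X0.
have reach := reaches_Y0_primitive q_pr N_gt0 LNX0 L'X0.
have X0X0 : in_class D X0 X0 by split=> //; rewrite subrr; apply: inL0.
have [G0 [KG0 G0X0]] := reach X0 X0X0 (P0 q (prime_gt1 q_pr)).
have [G [KG GX]] := reach X (conj LXX0 QX) (PX q (prime_gt1 q_pr)).
have [Kadj adjK] := discr_kernel_adj KG.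
exists (\adj G *m G0); split; first exact/discr_kernel_in_Up/discr_kernelM.
exists N; split=> //; first exact: in_class_inL_scale (conj LXX0 QX).
by rewrite -mulmxA G0X0 -GX mulmxA adjK mul1mx.
Qed.

Theorem mainTheorem9 (D : int) (mu : 'cV[rat]_4) (m : rat) (X0 : 'cV[rat]_4) :
  prime_disc D ->
  inL' D mu ->
  (exists k : int, m = k%:~R + Qf D mu) ->
  0 < m ->
  L0 D m mu X0 ->
  forall X : 'cV[rat]_4, L0 D m mu X <-> in_UX0 D X0 X.
Proof.
move=> _ L'mu _ _ [LX0mu QX0 P0] X; have L'X0 := inL'_translate L'mu LX0mu.
split=> [[LXmu QX PX] | UX].
  have LXX0 : inL (X - X0) by apply: inL_subr_trans LXmu _; rewrite -opprB; apply: inLN.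
  by apply: in_UX0_of_class => //; rewrite QX QX0.
split.
- exact: inL_subr_trans (in_UX0_inL L'X0 UX) LX0mu.
- by rewrite (in_UX0_Qf UX) QX0.
- exact: in_UX0_primitive L'X0 UX P0.
Qed.
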